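(* Let $G=(V,E)$ be a finite undirected graph without multi-edges and self-loops, with $N=|V|\ge 1$. Suppose that $G$ is removed completely by the leaf-removal algorithm, and let $C\subseteq V$ be the set of vertices covered by the algorithm. Then the linear-programming relaxation $$\min\ \frac{1}{N}\sum_{i\in V}x_i \quad\text{subject to}\quad x_i+x_j\ge 1\ \ \forall (i,j)\in E,\qquad x_i\in[0,1]\ \ \forall i\in V$$ has an optimal solution, and its optimal value equals $|C|/N$, the value obtained by the leaf-removal algorithm.
   Context: The minimum vertex cover problem on $G$ is the integer program: minimize $\frac1N\sum_{i\in V}x_i$ subject to $x_i+x_j\ge 1$ for all $(i,j)\in E$ and $x_i\in\{0,1\}$ for all $i\in V$. Its linear-programming (LP) relaxation replaces $x_i\in\{0,1\}$ by $x_i\in[0,1]$. A leaf is a vertex of degree one. The leaf-removal algorithm works as follows: as long as the current graph contains a leaf $w$, let $v$ be the unique neighbor of $w$; cover $v$ (add it to $C$) and delete $v$ together with all its incident edges from the current graph. The algorithm stops when the remaining graph has no leaf; if edges then remain, all vertices of the remaining non-trivial connected components (the leaf-removal core) are also covered. The graph $G$ is said to be removed completely by leaf removal if, when the algorithm stops, the remaining graph has no edges (the leaf-removal core is empty), so that $C$ consists exactly of the vertices covered during the leaf-removal steps. *)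

From HB Require Import structures.
From mathcomp Require Import all_boot all_order all_algebra.
Set Implicit Arguments. Unset Strict Implicit. Unset Printing Implicit Defensive.
Import Order.TTheory GRing.Theory Num.Theory.

(* A simple graph on a finite vertex type T: adjacency relation e,
   assumed symmetric and irreflexive in the theorem.  The edge set is
   E = {{i,j} | e i j}. *)

(* Neighbours of w in the current graph, i.e. the subgraph induced on the
   set U of not-yet-deleted vertices. *)
Definition nbrs (T : finType) (e : rel T) (U : {set T}) (w : T) : {set T} :=
  [set u in U | e w u].

(* One leaf-removal step on state (U, C): U = remaining vertices,
   C = covered vertices.  w is a leaf of the current graph (degree one),
   v its unique neighbour; v is covered and deleted with its edges. *)
Inductive lr_reach (T : finType) (e : rel T) : {set T} -> {set T} -> Prop :=
| lr_start : lr_reach e [set: T] set0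
| lr_step (U C : {set T}) (w v : T) :
    lr_reach e U C -> w \in U -> nbrs e U w = [set v] ->
    lr_reach e (U :\ v) (v |: C).

Definition no_edges (T : finType) (e : rel T) (U : {set T}) : Prop :=
  forall i j, i \in U -> j \in U -> ~~ e i j.

Definition lp_feasible (R : realFieldType) (T : finType) (e : rel T)
    (x : T -> R) : Prop :=
  (forall i, 0 <= x i <= 1)%R /\ (forall i j, e i j -> 1 <= x i + x j)%R.

Definition lp_obj (R : realFieldType) (T : finType) (x : T -> R) : R :=
  ((\sum_(i : T) x i) / #|T|%:R)%R.

(* Every vertex v covered by leaf removal can be charged to the leaf w that
   caused its removal: the edge {v, w} lies in the graph, w is left isolated
   once v is deleted, and hence distinct covered vertices get distinct leaves,
   none of them covered.  These edges form a matching of size |C|, so any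
   LP-feasible y has sum at least |C|.  Conversely, when the core is empty
   every edge meets C, so the indicator vector of C is feasible and attains
   this bound. *)
From HB Require Import structures.
From mathcomp Require Import all_boot all_order all_algebra.
Import Order.TTheory GRing.Theory Num.Theory.

Set Implicit Arguments.
Unset Strict Implicit.
Unset Printing Implicit Defensive.

Section LeafRemoval.

Variables (T : finType) (e : rel T).
Hypotheses (e_sym : symmetric e) (e_irr : irreflexive e).

Lemma nbrs_eq0P (U : {set T}) (x : T) :
  reflect (forall u, u \in U -> ~~ e x u) (nbrs e U x == set0).
Proof.
apply: (iffP eqP) => [nx0 u uU|noadj].
  by apply/negP => exu; move/setP: nx0 => /(_ u); rewrite !inE uU exu.
apply/setP => u; rewrite !inE; apply/negP => /andP[uU exu].
by move: (noadj u uU); rewrite exu.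
Qed.

Lemma lr_reach_setC (U C : {set T}) : lr_reach e U C -> U = ~: C.
Proof.
elim=> [|{}U {}C w v _ -> _ _]; first by rewrite setC0.
by apply/setP => z; rewrite !inE negb_or.
Qed.

(* [m v] is the leaf whose removal step covered [v]. *)
Definition leaf_witness (U C : {set T}) (m : T -> T) : Prop :=
  {in C, forall v, [&& e v (m v), m v \in U & nbrs e U (m v) == set0]}
  /\ {in C &, injective m}.

Lemma leaf_witness_step (U C : {set T}) (m : T -> T) (w v : T) :
  U = ~: C -> leaf_witness U C m -> w \in U -> nbrs e U w = [set v] ->
  leaf_witness (U :\ v) (v |: C) (fun z => if z == v then w else m z).
Proof.
move=> UE [wit m_inj] wU nbw.
have : v \in nbrs e U w by rewrite nbw set11.
rewrite inE => /andP[vU ewv].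
have wNv : w != v by apply: contraTneq ewv => ->; rewrite e_irr.
have vNC : v \notin C by move: vU; rewrite UE inE.
have nb_w u : u \in U -> e w u -> u = v.
  by move=> uU ewu; move/setP: nbw => /(_ u); rewrite !inE uU ewu => /esym/eqP.
have isolated z : z \in C -> forall u, u \in U -> ~~ e (m z) u.
  by move=> zC; case/and3P: (wit z zC) => _ _ /nbrs_eq0P.
have wNm z : z \in C -> w != m z.
  by move=> zC; apply: contraTneq (isolated z zC v vU) => <-; rewrite ewv.
have zNv z : z \in C -> (z == v) = false.
  by move=> zC; apply: contraNF vNC => /eqP <-.
split.
- move=> z; rewrite !inE => /orP[/eqP->|zC].
    rewrite eqxx e_sym ewv wNv wU /=; apply/nbrs_eq0P => u.
    rewrite !inE => /andP[uNv uU]; apply: contra uNv => ewu.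
    by rewrite (nb_w u uU ewu).
  rewrite zNv //; case/and3P: (wit z zC) => -> mzU _.
  rewrite mzU andbT /=; apply/andP; split.
    by apply: contraTneq (isolated z zC w wU) => ->; rewrite e_sym ewv.
  apply/nbrs_eq0P => u; rewrite inE => /andP[_ uU]; exact: isolated.
- move=> a b; rewrite !inE => /orP[/eqP->|aC] /orP[/eqP->|bC] //=;
    rewrite ?eqxx ?zNv //.
  + by move/eqP; rewrite (negbTE (wNm b bC)).
  + by move/esym/eqP; rewrite (negbTE (wNm a aC)).
  + exact: m_inj.
Qed.

Lemma leaf_witness_disjoint (U C : {set T}) (m : T -> T) :
  U = ~: C -> leaf_witness U C m -> [disjoint C & m @: C].
Proof.
move=> UE [wit _]; rewrite disjoint_sym disjoints_subset -UE.
by apply/subsetP => _ /imsetP[v /wit /and3P[_ mvU _] ->].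
Qed.

Lemma lr_reach_leaf_witness (U C : {set T}) :
  lr_reach e U C -> exists m, leaf_witness U C m.
Proof.
elim=> [|{}U {}C w v run [m wit] wU nbw].
  by exists id; split=> v; rewrite inE.
by eexists; apply: leaf_witness_step wit wU nbw; apply: lr_reach_setC.
Qed.

Lemma lr_reach_cover (U C : {set T}) :
  lr_reach e U C -> no_edges e U -> forall i j, e i j -> (i \in C) || (j \in C).
Proof.
move=> /lr_reach_setC UE core0 i j; apply: contraTT; rewrite negb_or => /andP[iU jU].
by apply: core0; rewrite UE inE.
Qed.

End LeafRemoval.

Section LPBounds.

Local Open Scope ring_scope.

Variables (R : realFieldType) (T : finType) (e : rel T).

Definition indicator (C : {set T}) : T -> R := fun i => (i \in C)%:R.

Lemma lp_feasible_indicator (C : {set T}) :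
  (forall i j, e i j -> (i \in C) || (j \in C)) ->
  lp_feasible e (indicator C).
Proof.
move=> cover; split=> [i|i j /cover]; rewrite /indicator.
  by case: (i \in C); rewrite ?lexx ?ler01.
by case: (i \in C); case: (j \in C); rewrite ?addr0 ?add0r ?lerDl ?ler01.
Qed.

Lemma lp_obj_indicator (C : {set T}) :
  lp_obj (indicator C) = (#|C|%:R / #|T|%:R).
Proof.
rewrite /lp_obj /indicator -natr_sum -sum1_card [in RHS]big_mkcond /=.
by congr (_%:R / _); apply: eq_bigr => i _; case: (i \in C).
Qed.

(* Weak LP duality against the matching formed by the edges {v, m v}, v in C. *)
Lemma lp_sum_ge_matching (C : {set T}) (m : T -> T) (y : T -> R) :
  {in C, forall v, e v (m v)} -> {in C &, injective m} ->
  [disjoint C & m @: C] -> lp_feasible e y ->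
  (#|C|%:R <= \sum_i y i).
Proof.
move=> edge_m m_inj dis [y01 y_edge].
have y_ge0 i : (0 <= y i) by case/andP: (y01 i).
apply: (@le_trans _ _ (\sum_(v in C) (y v + y (m v)))).
  by rewrite -sum1_card natr_sum ler_sum // => v vC; apply/y_edge/edge_m.
rewrite big_split /= -(big_imset _ m_inj) -bigU //=.
rewrite [leRHS](bigID (mem (C :|: m @: C))) /=.
rewrite (@eq_bigl _ _ _ _ _ _ (mem (C :|: m @: C))) => [|i]; last by rewrite !inE.
by rewrite lerDl sumr_ge0.
Qed.

End LPBounds.

Theorem theorem1 (R : realFieldType) (T : finType) (e : rel T)
    (e_sym : symmetric e) (e_irr : irreflexive e) (hN : (0 < #|T|)%N)
    (U C : {set T}) (run : lr_reach e U C) (core_empty : no_edges e U) :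
  exists x : T -> R,
    [/\ lp_feasible e x,
        (forall y : T -> R, lp_feasible e y -> (lp_obj x <= lp_obj y)%R)
      & lp_obj x = (#|C|%:R / #|T|%:R)%R].
Proof.
have [m wit] := lr_reach_leaf_witness e_sym e_irr run.
have dis := leaf_witness_disjoint (lr_reach_setC run) wit.
have [witE m_inj] := wit.
have edge_m : {in C, forall v, e v (m v)} by move=> v /witE /and3P[].
exists (indicator R C); split.
- exact/lp_feasible_indicator/(lr_reach_cover run).
- move=> y y_feas; rewrite lp_obj_indicator /lp_obj.
  rewrite ler_wpM2r ?invr_ge0 ?ler0n //.
  exact: lp_sum_ge_matching edge_m m_inj dis y_feas.
- exact: lp_obj_indicator.
Qed.
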